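(* Let $f_0,f_1$ be real polynomials with $f_1\neq0$ and $\deg f_1<\deg f_0$, and let $R=f_1/f_0$. Run the modified Euclidean algorithm $f_{k-1}=d_kf_k-f_{k+1}$ with $\deg f_{k+1}<\deg f_k$ for $k=1,\dots,m$, where $f_{m+1}=0$ (so $d_1,\dots,d_m$ are real polynomials and $$-R=-\cfrac{1}{d_1-\cfrac{1}{d_2-\cfrac{1}{\ddots-\cfrac{1}{d_m}}}}\ ).$$ Then $$\operatorname{Ind}_{\mathbb{P}\mathbb{R}}(R)=-\sum_{k=1}^m\operatorname{Ind}_\infty(d_k).$$
   Context: For a real rational function $R$ and a real pole $\omega_0$ of $R$ of odd order, $\operatorname{Ind}_{\omega_0}(R)=+1$ if $R(\omega_0-0)<0<R(\omega_0+0)$ and $-1$ if $R(\omega_0-0)>0>R(\omega_0+0)$; $\operatorname{Ind}_{-\infty}^{+\infty}(R)$ is the sum of these over all real poles of $R$ of odd order. Writing $R=f_1/f_0$, $R$ has a pole at $\infty$ of order $\deg f_1-\deg f_0$ when positive; if this order is odd, $\operatorname{Ind}_\infty(R)=+1$ if $R(+\infty)<0<R(-\infty)$ and $-1$ if $R(+\infty)>0>R(-\infty)$; otherwise $0$. $\operatorname{Ind}_{\mathbb{P}\mathbb{R}}(R)=\operatorname{Ind}_{-\infty}^{+\infty}(R)+\operatorname{Ind}_\infty(R)$. For a polynomial $d(\omega)=c\omega^\nu+\dots$: $\operatorname{Ind}_\infty(d)=-\operatorname{sign}c$ if $\nu$ is odd and $0$ if $\nu$ is even. *)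

From HB Require Import structures.
From mathcomp Require Import all_boot all_order all_algebra.
From mathcomp Require Import polyrcf.
From mathcomp Require Import boolp.
Set Implicit Arguments. Unset Strict Implicit. Unset Printing Implicit Defensive.
Import Order.TTheory GRing.Theory Num.Theory.
Local Open Scope ring_scope.

Section CauchyIndex.
Variable R : rcfType.

Definition ratf (f1 f0 : {poly R}) (x : R) : R := f1.[x] / f0.[x].

(* sign of g just left / just right of a, i.e. the sign of g(a-0), g(a+0) *)
Definition sgn_left (g : R -> R) (a s : R) : Prop :=
  exists2 e : R, 0 < e & forall x, a - e < x < a -> 0 < s * g x.
Definition sgn_right (g : R -> R) (a s : R) : Prop :=
  exists2 e : R, 0 < e & forall x, a < x < a + e -> 0 < s * g x.
Definition sgn_pinfty (g : R -> R) (s : R) : Prop :=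
  exists M : R, forall x, M < x -> 0 < s * g x.
Definition sgn_ninfty (g : R -> R) (s : R) : Prop :=
  exists M : R, forall x, x < M -> 0 < s * g x.

(* order of the pole of f1/f0 at a real point a (a pole iff positive) *)
Definition pole_order (f1 f0 : {poly R}) (a : R) : int :=
  (mup a f0)%:Z - (mup a f1)%:Z.

Definition odd_pole (f1 f0 : {poly R}) (a : R) : bool :=
  (0 < pole_order f1 f0 a) && odd `|pole_order f1 f0 a|%N.

Definition Ind_at (f1 f0 : {poly R}) (a : R) : int :=
  if odd_pole f1 f0 a then
    if `[< sgn_left (ratf f1 f0) a (-1) /\ sgn_right (ratf f1 f0) a 1 >] then 1
    else if `[< sgn_left (ratf f1 f0) a 1 /\ sgn_right (ratf f1 f0) a (-1) >]
    then -1 else 0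
  else 0.

(* Ind_{-oo}^{+oo}(f1/f0): sum over real poles of odd order; all real poles
   are real roots of f0, enumerated without repetition by rootsR f0 *)
Definition Ind_line (f1 f0 : {poly R}) : int :=
  \sum_(a <- rootsR f0) Ind_at f1 f0 a.

Definition pole_order_inf (f1 f0 : {poly R}) : int :=
  (size f1)%:Z - (size f0)%:Z.

Definition Ind_inf (f1 f0 : {poly R}) : int :=
  if (0 < pole_order_inf f1 f0) && odd `|pole_order_inf f1 f0|%N then
    if `[< sgn_pinfty (ratf f1 f0) (-1) /\ sgn_ninfty (ratf f1 f0) 1 >] then 1
    else if `[< sgn_pinfty (ratf f1 f0) 1 /\ sgn_ninfty (ratf f1 f0) (-1) >]
    then -1 else 0
  else 0.

Definition Ind_PR (f1 f0 : {poly R}) : int := Ind_line f1 f0 + Ind_inf f1 f0.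

Definition Ind_inf_poly (d : {poly R}) : int := Ind_inf d 1.

End CauchyIndex.

From HB Require Import structures.
From mathcomp Require Import all_boot all_order all_algebra.
From mathcomp Require Import polyrcf polyorder qe_rcf_th lra zify.
From mathcomp Require Import boolp.
Import Order.TTheory GRing.Theory Num.Theory Num.Def.
Local Open Scope ring_scope.

(* Away from infinity, the Cauchy index of f1/f0 at a real pole is the [jump]
   of the real-closed-field library, so Ind_PR(f1/f0) = cindexR f1 f0 (there is
   no pole at infinity because deg f1 < deg f0).  A Euclidean step
   f_(k-1) = d_k f_k - f_(k+1) turns the Sturm recursion of cindexR into
   cindexR f_k f_(k-1) = crossR (f_(k-1) f_k) + cindexR f_(k+1) f_k, and
   crossR (f_(k-1) f_k) = crossR d_k because f_(k-1) f_k and d_k f_k^2 have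
   leading coefficients of the same sign and degrees of the same parity.
   Finally crossR d = - Ind_oo(d), and the recursion telescopes. *)

Section CauchyIndexEuclid.
Context {R : rcfType}.
Implicit Types p q d r : {poly R}.

Lemma mup_mu (x : R) p : mup x p = \mu_x p.
Proof.
have [->|p0] := eqVneq p 0.
  rewrite mu0; apply/eqP; rewrite -leqn0.
  rewrite /mup; case: arg_maxnP => //=.
  by move=> [i hi] /= _ _; move: hi; rewrite size_poly0; case: i.
apply/eqP; rewrite eqn_leq; apply/andP; split.
  by rewrite -root_le_mu // -mup_geq.
by rewrite mup_geq // root_le_mu.
Qed.

Lemma odd_pole_mu q p x : odd_pole q p x = odd (\mu_x p - \mu_x q).
Proof.
rewrite /odd_pole /pole_order !mup_mu.
have [le|lt] := leqP (\mu_x p) (\mu_x q).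
  by rewrite (eqP le) ltNge subr_le0 lez_nat le.
by rewrite subzn ?ltz_nat ?subn_gt0 ?lt // ltnW.
Qed.

Lemma gt0_mul_sgr (v s : R) : s != 0 -> Num.sg v = s -> 0 < s * v.
Proof.
move=> + sv; rewrite -sv => s0; rewrite -normrEsg normr_gt0.
by apply: contraNneq s0 => ->; rewrite sgr0.
Qed.

Lemma sgn_right_opp (g : R -> R) a s : sgn_right g a s -> ~ sgn_right g a (- s).
Proof.
move=> [e1 e1p h1] [e2 e2p h2].
have e0 : 0 < minr e1 e2 by rewrite lt_min e1p.
have m1 : minr e1 e2 <= e1 by rewrite ge_min lexx.
have m2 : minr e1 e2 <= e2 by rewrite ge_min lexx orbT.
have y1 : a < a + minr e1 e2 / 2 < a + e1 by apply/andP; split; lra.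
have y2 : a < a + minr e1 e2 / 2 < a + e2 by apply/andP; split; lra.
by have := h1 _ y1; have := h2 _ y2; rewrite mulNr; lra.
Qed.

Lemma sgn_ninfty_opp (g : R -> R) s : sgn_ninfty g s -> ~ sgn_ninfty g (- s).
Proof.
move=> [M1 h1] [M2 h2].
have m1 : minr M1 M2 <= M1 by rewrite ge_min lexx.
have m2 : minr M1 M2 <= M2 by rewrite ge_min lexx orbT.
have y1 : minr M1 M2 - 1 < M1 by lra.
have y2 : minr M1 M2 - 1 < M2 by lra.
by have := h1 _ y1; have := h2 _ y2; rewrite mulNr; lra.
Qed.

Lemma index_from_signs (L Rt : R -> Prop) (s : R) :
    (s = 1 \/ s = -1) -> (Rt s -> ~ Rt (- s)) -> L (- s) -> Rt s ->
  (if `[< L (-1) /\ Rt 1 >] then 1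
   else if `[< L 1 /\ Rt (-1) >] then -1 else 0) = sgz s.
Proof.
move=> [->|->] Rt_opp Ls Rs.
  by rewrite asboolT ?sgz1.
rewrite asboolF ?sgzN ?sgz1; last by case=> _; rewrite -[1]opprK; exact: Rt_opp.
by rewrite asboolT //; split => //; rewrite -[1]opprK.
Qed.

Lemma sgr_ratf q p y : Num.sg (ratf q p y) = Num.sg (q * p).[y].
Proof. by rewrite /ratf hornerM !sgrM sgrV. Qed.

Lemma sgp_right_sign p x : p != 0 -> sgp_right p x = 1 \/ sgp_right p x = -1.
Proof.
move=> /(sgp_right_square x) /eqP; rewrite -expr2 sqrf_eq1.
by case/orP=> /eqP; [left | right].
Qed.

Lemma ratf_sgn_right q p x : q * p != 0 ->
  sgn_right (ratf q p) x (sgp_right (q * p) x).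
Proof.
move=> qp0; exists (next_root (q * p) x (x + 1) - x).
  by rewrite subr_gt0 next_root_gt // ltrDl.
move=> y hy; apply: gt0_mul_sgr; first by rewrite sgp_right_eq0.
rewrite sgr_ratf (@sgr_neighpr _ (x + 1) _ x) // /neighpr in_itv /=.
by move: hy; rewrite addrC subrK.
Qed.

Lemma ratf_sgn_left q p x : q * p != 0 ->
  sgn_left (ratf q p) x ((-1) ^+ odd (\mu_x (q * p)) * sgp_right (q * p) x).
Proof.
move=> qp0; exists (x - prev_root (q * p) (x - 1) x).
  by rewrite subr_gt0 prev_root_lt // gtrBl.
move=> y hy; apply: gt0_mul_sgr.
  by rewrite mulf_neq0 ?signr_eq0 ?sgp_right_eq0.
rewrite sgr_ratf (@sgr_neighpl _ (x - 1) _ x) // /neighpl in_itv /=.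
by move: hy; rewrite opprB addrC subrK.
Qed.

Lemma Ind_at_jump q p x : q != 0 -> p != 0 -> Ind_at q p x = jump q p x.
Proof.
move=> q0 p0; have qp0 : q * p != 0 by rewrite mulf_neq0.
rewrite /Ind_at /jump odd_pole_mu q0 /=.
have [podd|] := boolP (odd _); last by rewrite mulr0n.
have lt_qp : (\mu_x q < \mu_x p)%N by rewrite -subn_gt0; case: (_ - _)%N podd.
have left_sign : (-1) ^+ odd (\mu_x (q * p)) * sgp_right (q * p) x
                 = - sgp_right (q * p) x.
  by rewrite mu_mul // oddD addbC -oddB ?(ltnW lt_qp) // podd mulN1r.
rewrite (@index_from_signs (sgn_left (ratf q p) x) (sgn_right (ratf q p) x)
                           (sgp_right (q * p) x)).
- by case: (sgp_right_sign _ x qp0) => ->; rewrite ?sgzN sgz1 ?ltr10 ?ltrN10.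
- exact: sgp_right_sign.
- exact: sgn_right_opp.
- by rewrite -left_sign; apply: ratf_sgn_left.
- exact: ratf_sgn_right.
Qed.

Lemma sgp_pinfty_neq0 p : p != 0 -> sgp_pinfty p != 0.
Proof. by rewrite sgr_eq0 lead_coef_eq0. Qed.

Lemma sgp_minfty_neq0 p : p != 0 -> sgp_minfty p != 0.
Proof. by rewrite sgr_eq0 mulf_eq0 signr_eq0 lead_coef_eq0. Qed.

Lemma ratf_sgn_pinfty q p : q * p != 0 ->
  sgn_pinfty (ratf q p) (sgp_pinfty (q * p)).
Proof.
move=> qp0; exists (cauchy_bound (q * p)) => y hy.
apply: gt0_mul_sgr; first exact: sgp_pinfty_neq0.
rewrite sgr_ratf (sgp_pinftyP (ge_cauchy_bound qp0)) //.
by rewrite in_itv /= andbT ltW.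
Qed.

Lemma ratf_sgn_ninfty q p : q * p != 0 ->
  sgn_ninfty (ratf q p) (sgp_minfty (q * p)).
Proof.
move=> qp0; exists (- cauchy_bound (q * p)) => y hy.
apply: gt0_mul_sgr; first exact: sgp_minfty_neq0.
rewrite sgr_ratf (sgp_minftyP (le_cauchy_bound qp0)) //.
by rewrite in_itv /= ltW.
Qed.

Lemma sgr_pm1 (v : R) : v != 0 -> Num.sg v = 1 \/ Num.sg v = -1.
Proof. by case: sgrP => // _ _; [left | right]. Qed.

Lemma sgp_minfty_pinfty p :
  sgp_minfty p = (-1) ^+ odd (size p).-1 * sgp_pinfty p.
Proof. by rewrite /sgp_minfty sgrM sgrX sgrN sgr1 signr_odd. Qed.

Lemma crossR_pinfty p : crossR p = sgz (sgp_pinfty p) *+ odd (size p).-1.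
Proof.
rewrite /crossR /variation sgp_minfty_pinfty /sgp_pinfty.
have [->|p0] := eqVneq p 0; first by rewrite lead_coef0 sgr0 sgz0 mul0rn mul0r.
rewrite -mulrA -expr2 sqr_sg lead_coef_eq0 p0 mulr1.
by case: odd; rewrite ?expr0 ?expr1 ?ltrN10 ?ltr10 ?mulr1 ?mulr0.
Qed.

Lemma Ind_inf_proper q p : (size q < size p)%N -> Ind_inf q p = 0.
Proof.
move=> lt_qp; rewrite /Ind_inf /pole_order_inf ltNge subr_le0 lez_nat.
by rewrite ltnW.
Qed.

Lemma Ind_inf_poly_crossR d : Ind_inf_poly d = - crossR d.
Proof.
have [->|d0] := eqVneq d 0.
  by rewrite crossR0 oppr0 /Ind_inf_poly Ind_inf_proper // size_poly0 size_poly1.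
rewrite /Ind_inf_poly /Ind_inf /pole_order_inf size_poly1 subzn ?size_poly_gt0 //.
rewrite subn1 crossR_pinfty.
have [hodd|] := boolP (odd _); last by rewrite andbF mulr0n oppr0.
have d1 : d * 1 != 0 by rewrite mulr1.
rewrite ltz_nat odd_gt0 //= (@index_from_signs (sgn_pinfty (ratf d 1))
  (sgn_ninfty (ratf d 1)) (sgp_minfty d)).
- by rewrite sgp_minfty_pinfty hodd mulN1r sgzN.
- by apply/sgr_pm1; rewrite mulf_neq0 ?signr_eq0 ?lead_coef_eq0.
- exact: sgn_ninfty_opp.
- rewrite sgp_minfty_pinfty hodd mulN1r opprK -[d in sgp_pinfty d]mulr1.
  exact: ratf_sgn_pinfty.
- by rewrite -[d in sgp_minfty d]mulr1; apply: ratf_sgn_ninfty.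
Qed.

Lemma crossR_congr p p' : sgp_pinfty p = sgp_pinfty p' ->
  odd (size p).-1 = odd (size p').-1 -> crossR p = crossR p'.
Proof. by rewrite !crossR_pinfty => -> ->. Qed.

Lemma crossR_euclid_step p q d r : q != 0 ->
    (size r < size q)%N -> (size q < size p)%N -> p = d * q - r ->
  crossR (p * q) = crossR d.
Proof.
move=> q0 lt_rq lt_qp def_p.
have lt_rp := ltn_trans lt_rq lt_qp.
have def_dq : d * q = p + r by rewrite def_p subrK.
have size_dq : size (d * q) = size p by rewrite def_dq size_polyDl.
have lead_dq : lead_coef (d * q) = lead_coef p by rewrite def_dq lead_coefDl.
have p0 : p != 0 by rewrite -size_poly_gt0 (leq_ltn_trans _ lt_qp).
have d0 : d != 0.
  by apply: contraTneq lt_qp => d0; rewrite -size_dq d0 mul0r size_poly0.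
apply: crossR_congr.
  rewrite /sgp_pinfty lead_coefM -lead_dq lead_coefM -mulrA -expr2.
  by rewrite sgrM sgrX sqr_sg lead_coef_eq0 q0 mulr1.
have [sd sq] : (0 < size d)%N /\ (0 < size q)%N by rewrite !size_poly_gt0.
move: size_dq; rewrite !size_mul // -!subn1 => size_dq.
have -> : (size p + size q - 1 - 1 = (size d - 1) + 2 * (size q - 1))%N.
  move: (size p) (size q) (size d) sd sq size_dq => a b c *; lia.
by rewrite oddD oddM andFb addbF.
Qed.

Lemma cindexR_euclid_step p q d r : q != 0 -> (size r < size q)%N ->
  p = d * q - r -> cindexR q p = crossR (p * q) + cindexR r q.
Proof.
move=> q0 lt_rq def_p; rewrite cindexR_rec; congr (_ + _).
have lq0 : lead_coef q != 0 by rewrite lead_coef_eq0.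
set c := lead_coef q ^+ Pdiv.Ring.rscalp p q.
have c0 : c != 0 by rewrite expf_neq0.
have rmod_p : Pdiv.Ring.rmodp p q = c *: (p %% q).
  by rewrite modpE scalerA mulrV ?scale1r // unitfE.
have mod_p : p %% q = - r.
  by rewrite def_p modpD modp_mull add0r modp_small // size_polyN.
rewrite /next_mod -/c rmod_p mod_p !scalerN scalerA mulNr scaleNr opprK.
apply: eq_bigr => x _; rewrite jump_mulCp gtr0_sgz ?mul1r //.
by rewrite lt0r mulf_neq0 //= -expr2 sqr_ge0.
Qed.

Lemma Ind_PR_cindexR q p : q != 0 -> (size q < size p)%N ->
  Ind_PR q p = cindexR q p.
Proof.
move=> q0 lt_qp.
have p0 : p != 0 by rewrite -size_poly_gt0 (leq_ltn_trans _ lt_qp).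
rewrite /Ind_PR Ind_inf_proper // addr0.
by apply: eq_bigr => x _; apply: Ind_at_jump.
Qed.

End CauchyIndexEuclid.

Theorem theorem60 (R : rcfType) (f0 f1 : {poly R}) (m : nat)
    (f d : nat -> {poly R})
    (hf1 : f1 != 0) (hdeg : (size f1 < size f0)%N)
    (hf0 : f 0%N = f0) (hf1' : f 1%N = f1)
    (heuc : forall k : nat, (1 <= k <= m)%N ->
        f k.-1 = d k * f k - f k.+1 /\ (size (f k.+1) < size (f k))%N)
    (hend : f m.+1 = 0) :
  Ind_PR f1 f0 = - \sum_(1 <= k < m.+1) Ind_inf_poly (d k).
Proof.
have fk0 k : (1 <= k <= m)%N -> f k != 0.
  by move=> /heuc [_ lt_k]; rewrite -size_poly_gt0 (leq_ltn_trans _ lt_k).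
have lt_size k : (1 <= k <= m)%N -> (size (f k) < size (f k.-1))%N.
  case: k => [|[|k]] // /andP [_ km]; first by rewrite hf0 hf1'.
  by have [_ +] := heuc k.+1 (ltnW km).
rewrite Ind_PR_cindexR // -hf0 -hf1'.
have -> : cindexR (f 1%N) (f 0%N)
          = \sum_(1 <= k < m.+1) crossR (f k.-1 * f k).
  rewrite (@telescope_sumr_eq _ 1 m.+1 (fun k => - cindexR (f k) (f k.-1))) //.
    by rewrite hend cindexR0p oppr0 add0r opprK.
  move=> k hk; have [def_f lt_f] := heuc k hk.
  rewrite (cindexR_euclid_step _ _ _ _ (fk0 _ hk) lt_f def_f) /=.
  by rewrite opprK addrC addrK.
rewrite -sumrN; apply: eq_big_nat => k hk; have [def_f lt_f] := heuc k hk.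
rewrite Ind_inf_poly_crossR opprK.
exact: (crossR_euclid_step _ _ _ _ (fk0 _ hk) lt_f (lt_size _ hk) def_f).
Qed.
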